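(* Let $C$ and $C'$ be configurations of 2REG that are both convex, let $v\in C$, and let $t\ge0$ be an integer with $\mathrm{d}_C((0,0),v)\le t$. Then $C\equiv'_{t,v}C'$ if and only if $C'$ is a consistent extension of the subset $M(v,t,C)$ of $C$.
   Context: Positions are elements of $\mathbb{Z}^2$; with $\epsilon_0=(1,0)$, $\epsilon_1=(0,1)$, $\epsilon_2=(-1,0)$, $\epsilon_3=(0,-1)$, positions $p,p'$ are adjacent if $p'-p$ is one of the $\epsilon_i$. A path is a nonempty sequence of positions with consecutive positions adjacent. A configuration of 2REG is a finite set $C\subseteq\mathbb{Z}^2$ containing $(0,0)$ in which any two elements are joined by a path inside $C$. A set $X\subseteq\mathbb{Z}^2$ is convex if for any $v,v'\in X$, every shortest path between $v$ and $v'$ in $\mathbb{Z}^2$ lies in $X$. For $p,p'\in C$, $\mathrm{d}_C(p,p')$ is the number of steps of a shortest path from $p$ to $p'$ inside $C$. For $p\in C$, $\mathrm{bc}_C(p)=(b_0,\dots,b_3)\in\{0,1\}^4$ with $b_i=1$ iff $p+\epsilon_i\in C$. $\mathrm{ai}(v,t,C)$ is the symbol $\mathrm{Q}$ if $\mathrm{d}_C((0,0),v)>t$, and otherwise the triple $(t,v,\{(v',\mathrm{bc}_C(v')) : v'\in C,\ \mathrm{d}_C((0,0),v')+\mathrm{d}_C(v',v)\le t\})$. $C\equiv'_{t,v}C'$ means $v\in C\cap C'$ and $\mathrm{ai}(v,t,C)=\mathrm{ai}(v,t,C')\neq\mathrm{Q}$. $M(v,t,C)=\{v'\in C:\mathrm{d}_C((0,0),v')+\mathrm{d}_C(v',v)\le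 t\}$. $C'$ is a consistent extension of a subset $M$ of $C$ if $M\subseteq C'$ and $\mathrm{bc}_C(w)=\mathrm{bc}_{C'}(w)$ for all $w\in M$. *)

From Stdlib Require Import ZArith List Arith ClassicalEpsilon.
Import ListNotations.
Open Scope Z_scope.

Definition pos := (Z * Z)%type.
Definition origin : pos := (0, 0).

Definition eps (i : nat) : pos :=
  match i with
  | 0%nat => (1, 0)
  | 1%nat => (0, 1)
  | 2%nat => (-1, 0)
  | _ => (0, -1)
  end.

Definition padd (p q : pos) : pos := (fst p + fst q, snd p + snd q).

Definition adjacent (p p' : pos) : Prop :=
  exists i, (i < 4)%nat /\ p' = padd p (eps i).

Fixpoint chain (l : list pos) : Prop :=
  match l with
  | x :: ((y :: _) as r) => adjacent x y /\ chain r
  | _ => True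
  end.

Definition path_in (X : pos -> Prop) (p q : pos) (n : nat) : Prop :=
  exists l : list pos,
    length l = S n /\ hd p l = p /\ last l p = q /\
    chain l /\ (forall x, In x l -> X x).

Definition finite_set (C : pos -> bool) : Prop :=
  exists l : list pos, forall x, C x = true -> In x l.

Definition mem (C : pos -> bool) : pos -> Prop := fun x => C x = true.

Definition configuration (C : pos -> bool) : Prop :=
  finite_set C /\ C origin = true /\
  (forall p q, C p = true -> C q = true -> exists n, path_in (mem C) p q n).

(* shortest paths in Z^2 *)
Definition plane : pos -> Prop := fun _ => True.

Definition convex (X : pos -> bool) : Prop :=
  forall v v', X v = true -> X v' = true ->
    forall l : list pos,
      l <> [] -> hd v l = v -> last l v = v' -> chain l ->
      (forall m, path_in plane v v' m -> (length l - 1 <= m)%nat) ->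
      forall x, In x l -> X x = true.

Definition is_dist (C : pos -> bool) (p q : pos) (n : nat) : Prop :=
  path_in (mem C) p q n /\ forall m, path_in (mem C) p q m -> (n <= m)%nat.

Definition dist (C : pos -> bool) (p q : pos) : nat :=
  epsilon (inhabits 0%nat) (is_dist C p q).

Definition bcode := (bool * bool * bool * bool)%type.

Definition bc (C : pos -> bool) (p : pos) : bcode :=
  (C (padd p (eps 0)), C (padd p (eps 1)), C (padd p (eps 2)), C (padd p (eps 3))).

Inductive AI : Type :=
  | Qsym : AI
  | Info : nat -> pos -> ((pos * bcode) -> Prop) -> AI.

Definition ai (v : pos) (t : nat) (C : pos -> bool) : AI :=
  if Nat.ltb t (dist C origin v) then Qsym
  else Info t v (fun pb => C (fst pb) = true /\
                   (dist C origin (fst pb) + dist C (fst pb) v <= t)%nat /\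
                   snd pb = bc C (fst pb)).

Definition equiv' (t : nat) (v : pos) (C C' : pos -> bool) : Prop :=
  C v = true /\ C' v = true /\ ai v t C = ai v t C' /\ ai v t C <> Qsym.

Definition Mset (v : pos) (t : nat) (C : pos -> bool) : pos -> Prop :=
  fun v' => C v' = true /\ (dist C origin v' + dist C v' v <= t)%nat.

Definition consistent_extension (C : pos -> bool) (M : pos -> Prop) (C' : pos -> bool) : Prop :=
  (forall w, M w -> C' w = true) /\ (forall w, M w -> bc C w = bc C' w).

(* In a convex configuration the intrinsic distance d_C is the Manhattan
   distance, so M(v,t,C) is the set of cells of C inside the fixed "ellipse"
   |w| + |w - v| <= t, and ai(v,t,C) records exactly C on this ellipse
   together with the border codes there.  Equality of the ai's therefore
   says that C' contains M(v,t,C) with the same border codes.  Conversely,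
   a consistent extension C' cannot contain an extra ellipse cell w: walking
   from w towards the origin inside C' (convexity) one meets, by induction on
   |w|, a neighbour u of w in M(v,t,C), and the common border code of u
   forces w into C. *)
From Stdlib Require Import ZArith List Arith Lia.
From Stdlib Require Import ClassicalEpsilon FunctionalExtensionality PropExtensionality.
Import ListNotations.

Definition manh (p q : pos) : nat :=
  Z.to_nat (Z.abs (fst q - fst p) + Z.abs (snd q - snd p)).

Lemma manh_sym p q : manh p q = manh q p.
Proof. destruct p, q; unfold manh; simpl; lia. Qed.

Lemma manh_refl p : manh p p = 0%nat.
Proof. destruct p; unfold manh; simpl; lia. Qed.

Lemma manh_eq0 p q : manh p q = 0%nat -> p = q.
Proof. destruct p, q; unfold manh; simpl; intros; f_equal; lia. Qed.

Lemma adjacent_sym p q : adjacent p q -> adjacent q p.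
Proof.
  intros [i [Hi ->]]; destruct p as [a b]; unfold padd.
  destruct i as [|[|[|[|i]]]]; simpl; try lia.
  - exists 2%nat; split; [lia|]; unfold padd; simpl; f_equal; lia.
  - exists 3%nat; split; [lia|]; unfold padd; simpl; f_equal; lia.
  - exists 0%nat; split; [lia|]; unfold padd; simpl; f_equal; lia.
  - exists 1%nat; split; [lia|]; unfold padd; simpl; f_equal; lia.
Qed.

Lemma manh_adjacent_le p u q : adjacent p u -> (manh u q <= S (manh p q))%nat.
Proof.
  intros [i [Hi ->]]; destruct p, q; unfold manh, padd.
  destruct i as [|[|[|[|i]]]]; simpl; lia.
Qed.

Lemma exists_adjacent_closer p q :
  p <> q -> exists u, adjacent p u /\ S (manh u q) = manh p q.
Proof.
  destruct p as [a b], q as [c d]; intros Hne.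
  destruct (Z_lt_le_dec a c); [exists (padd (a, b) (eps 0))|].
  { split; [exists 0%nat; split; [lia | reflexivity]|]; unfold manh, padd; simpl; lia. }
  destruct (Z_lt_le_dec c a); [exists (padd (a, b) (eps 2))|].
  { split; [exists 2%nat; split; [lia | reflexivity]|]; unfold manh, padd; simpl; lia. }
  destruct (Z_lt_le_dec b d); [exists (padd (a, b) (eps 1))|].
  { split; [exists 1%nat; split; [lia | reflexivity]|]; unfold manh, padd; simpl; lia. }
  destruct (Z_lt_le_dec d b); [exists (padd (a, b) (eps 3))|].
  { split; [exists 3%nat; split; [lia | reflexivity]|]; unfold manh, padd; simpl; lia. }
  exfalso; apply Hne; f_equal; lia.
Qed.

(* The default of [last] is irrelevant on a nonempty list; quantifying over it
   keeps the inductions below free of bookkeeping. *)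
Lemma manh_le_chain_length r : forall x d,
  chain (x :: r) -> (manh x (last (x :: r) d) <= length r)%nat.
Proof.
  induction r as [|y r IH]; intros x d Hc.
  - simpl; rewrite manh_refl; lia.
  - destruct Hc as [Hxy Hc].
    pose proof (IH y d Hc).
    pose proof (manh_adjacent_le y x (last (y :: r) d) (adjacent_sym x y Hxy)).
    change (last (x :: y :: r) d) with (last (y :: r) d); cbn [length]; lia.
Qed.

Lemma manh_le_path X p q m : path_in X p q m -> (manh p q <= m)%nat.
Proof.
  intros [[|x r] [Hlen [Hhd [Hlast [Hc _]]]]]; [discriminate|].
  simpl in Hhd, Hlen; subst x q.
  pose proof (manh_le_chain_length r p p Hc); lia.
Qed.

Lemma exists_manh_chain n : forall p q, manh p q = n ->
  exists r, length r = n /\ chain (p :: r) /\ forall d, last (p :: r) d = q.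
Proof.
  induction n as [|n IH]; intros p q Hn.
  - exists []; split; [reflexivity|]; split; [exact I|].
    intros d; apply manh_eq0; exact Hn.
  - assert (Hpq : p <> q) by (intros ->; rewrite manh_refl in Hn; discriminate).
    destruct (exists_adjacent_closer p q Hpq) as [u [Hpu Hu]].
    destruct (IH u q ltac:(lia)) as [r [Hl [Hc Hla]]].
    exists (u :: r); simpl; split; [lia|]; split; [split; assumption|].
    intros d; apply Hla.
Qed.

Lemma convex_manh_chain (X : pos -> bool) p q r :
  convex X -> X p = true -> X q = true ->
  length r = manh p q -> chain (p :: r) -> (forall d, last (p :: r) d = q) ->
  forall x, In x (p :: r) -> X x = true.
Proof.
  intros Hcv Hp Hq Hl Hc Hla.
  apply (Hcv p q Hp Hq (p :: r)); auto; [discriminate|].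
  intros m Hm; apply manh_le_path in Hm; simpl; lia.
Qed.

Lemma dist_is_dist (C : pos -> bool) p q n : is_dist C p q n -> dist C p q = n.
Proof.
  intros Hn; unfold dist.
  destruct (epsilon_spec (inhabits 0%nat) (is_dist C p q) (ex_intro _ n Hn))
    as [Hd Hdmin].
  destruct Hn as [Hn Hnmin].
  apply Hnmin in Hd; apply Hdmin in Hn; lia.
Qed.

Lemma dist_convex (C : pos -> bool) p q :
  convex C -> C p = true -> C q = true -> dist C p q = manh p q.
Proof.
  intros Hcv Hp Hq; apply dist_is_dist; split.
  - destruct (exists_manh_chain _ p q eq_refl) as [r [Hl [Hc Hla]]].
    exists (p :: r); split; [simpl; lia|]; split; [reflexivity|].
    split; [apply Hla|]; split; [exact Hc|].
    exact (convex_manh_chain C p q r Hcv Hp Hq Hl Hc Hla).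
  - intros m; apply manh_le_path.
Qed.

Lemma convex_step_toward (X : pos -> bool) p q :
  convex X -> X p = true -> X q = true -> p <> q ->
  exists u, adjacent p u /\ S (manh u q) = manh p q /\ X u = true.
Proof.
  intros Hcv Hp Hq Hpq.
  destruct (exists_adjacent_closer p q Hpq) as [u [Hpu Hu]].
  destruct (exists_manh_chain _ u q eq_refl) as [r [Hl [Hc Hla]]].
  exists u; split; [exact Hpu|]; split; [exact Hu|].
  apply (convex_manh_chain X p q (u :: r)); simpl; auto.
  lia.
Qed.

Lemma bc_eq_adjacent (C C' : pos -> bool) u w :
  bc C u = bc C' u -> adjacent u w -> C w = C' w.
Proof.
  unfold bc; intros Hbc [i [Hi ->]]; injection Hbc; intros.
  destruct i as [|[|[|[|i]]]]; simpl in *; auto; lia.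
Qed.

Definition window (v : pos) (t : nat) (w : pos) : Prop :=
  (manh origin w + manh w v <= t)%nat.

Lemma Mset_convex (C : pos -> bool) v t w :
  convex C -> C origin = true -> C v = true ->
  Mset v t C w <-> C w = true /\ window v t w.
Proof.
  intros Hcv H0 Hv; unfold Mset, window; split; intros [Hw Hwt];
    rewrite ?(dist_convex C origin w), ?(dist_convex C w v) in * by auto; auto.
Qed.

Lemma ai_convex (C : pos -> bool) v t :
  convex C -> C origin = true -> C v = true -> (manh origin v <= t)%nat ->
  ai v t C = Info t v (fun pb => C (fst pb) = true /\ window v t (fst pb) /\
                                 snd pb = bc C (fst pb)).
Proof.
  intros Hcv H0 Hv Ht; unfold ai.
  rewrite (dist_convex C origin v) by auto.
  replace (Nat.ltb t (manh origin v)) with false by (symmetry; apply Nat.ltb_ge; lia).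
  f_equal; apply functional_extensionality; intros [w b]; simpl.
  apply propositional_extensionality.
  pose proof (Mset_convex C v t w Hcv H0 Hv) as HM; unfold Mset in HM; tauto.
Qed.

Lemma ai_eq_consistent_extension (C C' : pos -> bool) v t :
  convex C -> convex C' -> C origin = true -> C' origin = true ->
  C v = true -> C' v = true -> (manh origin v <= t)%nat ->
  ai v t C = ai v t C' -> consistent_extension C (Mset v t C) C'.
Proof.
  intros HcvC HcvC' HC0 HC'0 Hv Hv' Ht Hai.
  rewrite (ai_convex C), (ai_convex C') in Hai by auto.
  injection Hai as Hinfo.
  assert (HM : forall w, Mset v t C w -> C' w = true /\ bc C w = bc C' w).
  { intros w Hw; apply Mset_convex in Hw; auto; destruct Hw as [Hw Hwin].
    pose proof (f_equal (fun P => P (w, bc C w)) Hinfo) as Hw'; simpl in Hw'.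
    assert (C' w = true /\ window v t w /\ bc C w = bc C' w)
      by (rewrite <- Hw'; auto).
    tauto. }
  split; intros w Hw; apply HM, Hw.
Qed.

Section ConsistentExtension.

Variables (C C' : pos -> bool) (v : pos) (t : nat).
Hypotheses (HcvC : convex C) (HcvC' : convex C')
           (HC0 : C origin = true) (HC'0 : C' origin = true) (Hv : C v = true).
Hypothesis Hext : consistent_extension C (Mset v t C) C'.

Lemma consistent_extension_window w :
  C' w = true -> window v t w -> C w = true.
Proof.
  remember (manh w origin) as n eqn:Hn; revert w Hn.
  induction n as [|n IH]; intros w Hn Hw' Hwin.
  - rewrite (manh_eq0 w origin) by lia; exact HC0.
  - assert (Hw0 : w <> origin) by (intros ->; rewrite manh_refl in Hn; discriminate).
    destruct (convex_step_toward C' w origin HcvC' Hw' HC'0 Hw0) as [u [Hwu [Hu Hu']]].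
    assert (Huwin : window v t u).
    { pose proof (manh_adjacent_le w u v Hwu).
      unfold window in *; rewrite (manh_sym origin u), (manh_sym origin w) in *; lia. }
    assert (HuM : Mset v t C u).
    { apply Mset_convex; auto; split; [apply IH|]; auto; lia. }
    rewrite (bc_eq_adjacent C C' u w (proj2 Hext u HuM) (adjacent_sym w u Hwu)).
    exact Hw'.
Qed.

Lemma window_info_iff (w : pos) (b : bcode) :
  (C w = true /\ window v t w /\ b = bc C w) <->
  (C' w = true /\ window v t w /\ b = bc C' w).
Proof.
  split.
  - intros [Hw [Hwin ->]].
    assert (HwM : Mset v t C w) by (apply Mset_convex; auto).
    repeat split; auto; [apply (proj1 Hext) | apply (proj2 Hext)]; exact HwM.
  - intros [Hw' [Hwin ->]].
    assert (HwM : Mset v t C w)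
      by (apply Mset_convex; auto; split; auto; apply consistent_extension_window; auto).
    repeat split; auto; [apply HwM | symmetry; apply (proj2 Hext); exact HwM].
Qed.

End ConsistentExtension.

Theorem theorem2 (C C' : pos -> bool) (v : pos) (t : nat) :
  configuration C -> configuration C' -> convex C -> convex C' ->
  C v = true -> (dist C origin v <= t)%nat ->
  (equiv' t v C C' <-> consistent_extension C (Mset v t C) C').
Proof.
  intros [_ [HC0 _]] [_ [HC'0 _]] HcvC HcvC' Hv Ht.
  rewrite (dist_convex C origin v) in Ht by auto.
  unfold equiv'; split.
  - intros [_ [Hv' [Hai _]]].
    apply ai_eq_consistent_extension; auto.
  - intros Hext.
    assert (Hv' : C' v = true).
    { apply (proj1 Hext), Mset_convex; auto; split; auto.
      unfold window; rewrite manh_refl; lia. }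
    rewrite (ai_convex C), (ai_convex C') by auto.
    repeat split; auto; [|discriminate].
    f_equal; apply functional_extensionality; intros [w b]; simpl.
    apply propositional_extensionality, window_info_iff; auto.
Qed.
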